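(* Let $R$ be a semiring and $f, g: N \to M$ homomorphisms of left $R$-semimodules. Let $\sim_{\langle f,g\rangle}$ be the relation on $M$ given by $m \sim_{\langle f,g\rangle} m'$ iff $h(m) = h(m')$ for all left $R$-semimodules $P$ and all homomorphisms $h: M \to P$ with $h \circ f = h \circ g$. Let $\sim_{(f,g)}$ be the relation on $M$ given by $m \sim_{(f,g)} m'$ iff there exist $k \ge 1$, $m_1, \ldots, m_k \in M$ and $n_1, \ldots, n_k, n'_1, \ldots, n'_k \in N$ with $m = m_1 + f(n_1) + g(n'_1)$, $m_i + f(n'_i) + g(n_i) = m_{i+1} + f(n_{i+1}) + g(n'_{i+1})$ for $1 \le i \le k-1$, and $m_k + f(n'_k) + g(n_k) = m'$. Then the relations $\sim_{\langle f,g\rangle}$ and $\sim_{(f,g)}$ are equal.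
   Context: A semiring $R$ is a commutative monoid $(R,+,0)$ with an associative multiplication with unit $1$, distributive on both sides, and with $0r = 0 = r0$. A left $R$-semimodule is a commutative monoid $(M,+,0)$ with a map $R\times M \to M$ satisfying $(rr')m = r(r'm)$, $(r+r')m = rm + r'm$, $r(m+m') = rm + rm'$, $1m = m$, $0m = 0 = r0$; homomorphisms are additive maps with $f(rm)=rf(m)$. *)

From HB Require Import structures.
From mathcomp Require Import all_boot all_algebra.
Set Implicit Arguments. Unset Strict Implicit. Unset Printing Implicit Defensive.
Import GRing.Theory.
Local Open Scope ring_scope.

Definition sim_hom (R : pzSemiRingType) (N M : lSemiModType R)
    (f g : {linear N -> M}) (m m' : M) : Prop :=
  forall (P : lSemiModType R) (h : {linear M -> P}),
    (forall n : N, h (f n) = h (g n)) -> h m = h m'.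

(* m ~(f,g) m' : zig-zag chain of length k >= 1, indexed 0..k-1. *)
Definition sim_chain (R : pzSemiRingType) (N M : lSemiModType R)
    (f g : {linear N -> M}) (m m' : M) : Prop :=
  exists (k : nat) (ms : nat -> M) (ns ns' : nat -> N),
    [/\ (0 < k)%N,
        m = ms 0%N + f (ns 0%N) + g (ns' 0%N),
        (forall i : nat, (i.+1 < k)%N ->
           ms i + f (ns' i) + g (ns i)
           = ms i.+1 + f (ns i.+1) + g (ns' i.+1))
      & ms k.-1 + f (ns' k.-1) + g (ns k.-1) = m'].

From HB Require Import structures.
From mathcomp Require Import all_boot all_algebra.
From mathcomp Require Import zify boolp.
Set Implicit Arguments. Unset Strict Implicit. Unset Printing Implicit Defensive.
Import GRing.Theory.
Local Open Scope ring_scope.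
Local Open Scope quotient_scope.

(* A homomorphism coequalizing f and g is constant along each link of a
   zig-zag chain, since it identifies m + f n' + g n with m + f n + g n'.
   Conversely, the chain relation is an equivalence compatible with addition
   and scaling that relates f n to g n, so the quotient of M by it is a
   semimodule and the projection coequalizes f and g; applying the defining
   property of ~<f,g> to this projection gives back the chain relation. *)

Record semimod_congruence (R : pzSemiRingType) (M : lSemiModType R) :=
  SemimodCongruence {
    congruence_rel :> equiv_rel M;
    congruenceD : forall x x' y y',
      congruence_rel x x' -> congruence_rel y y' ->
      congruence_rel (x + y) (x' + y');
    congruenceZ : forall r x x', congruence_rel x x' ->
      congruence_rel (r *: x) (r *: x') }.

Section QuotientSemimodule.
Variables (R : pzSemiRingType) (M : lSemiModType R) (c : semimod_congruence M).

Definition quotmod := {eq_quot c}.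
HB.instance Definition _ := Choice.on quotmod.
HB.instance Definition _ := Quotient.on quotmod.

Local Notation pi := \pi_quotmod.

Lemma quotmod_eqP x y : pi x = pi y <-> c x y.
Proof. by split => /eqmodP. Qed.

Lemma quotmod_reprP x : c (repr (pi x)) x.
Proof. by apply/quotmod_eqP; rewrite reprK. Qed.

(* Locked, so that rewriting with quotmod_addE cannot unfold a nested sum. *)
Definition quotmod_add (p q : quotmod) : quotmod := locked pi (repr p + repr q).
Definition quotmod_scale (r : R) (q : quotmod) : quotmod :=
  locked pi (r *: repr q).

Lemma quotmod_addE x y : quotmod_add (pi x) (pi y) = pi (x + y).
Proof.
by rewrite /quotmod_add -lock; apply/quotmod_eqP/congruenceD; apply: quotmod_reprP.
Qed.

Lemma quotmod_scaleE r x : quotmod_scale r (pi x) = pi (r *: x).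
Proof.
by rewrite /quotmod_scale -lock; apply/quotmod_eqP/congruenceZ/quotmod_reprP.
Qed.

Lemma quotmod_addA : associative quotmod_add.
Proof.
move=> p q r; elim/quotW: p => x; elim/quotW: q => y; elim/quotW: r => z.
by rewrite !quotmod_addE addrA.
Qed.

Lemma quotmod_addC : commutative quotmod_add.
Proof. by elim/quotW=> x; elim/quotW=> y; rewrite !quotmod_addE addrC. Qed.

Lemma quotmod_add0 : left_id (pi 0) quotmod_add.
Proof. by elim/quotW=> x; rewrite quotmod_addE add0r. Qed.

HB.instance Definition _ :=
  GRing.isNmodule.Build quotmod quotmod_addA quotmod_addC quotmod_add0.

Lemma quotmod_scaleA a b (q : quotmod) :
  quotmod_scale a (quotmod_scale b q) = quotmod_scale (a * b) q.
Proof. by elim/quotW: q => x; rewrite !quotmod_scaleE scalerA. Qed.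

Lemma quotmod_scale0 (q : quotmod) : quotmod_scale 0 q = 0.
Proof. by elim/quotW: q => x; rewrite quotmod_scaleE scale0r. Qed.

Lemma quotmod_scale1 : left_id 1 quotmod_scale.
Proof. by elim/quotW=> x; rewrite quotmod_scaleE scale1r. Qed.

Lemma quotmod_scaleDr : right_distributive quotmod_scale quotmod_add.
Proof.
move=> a; elim/quotW=> x; elim/quotW=> y.
by rewrite quotmod_addE !quotmod_scaleE quotmod_addE scalerDr.
Qed.

Lemma quotmod_scaleDl (q : quotmod) :
  {morph quotmod_scale^~ q : a b / a + b >-> quotmod_add a b}.
Proof.
by elim/quotW: q => x a b; rewrite !quotmod_scaleE quotmod_addE scalerDl.
Qed.

HB.instance Definition _ := GRing.Nmodule_isLSemiModule.Build R quotmod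
  quotmod_scaleA quotmod_scale0 quotmod_scale1 quotmod_scaleDr quotmod_scaleDl.

Definition quotmod_pi : M -> quotmod := pi.

Lemma quotmod_pi_semilinear : semilinear_for *:%R quotmod_pi.
Proof.
by split=> [a x | x y]; rewrite /quotmod_pi -?quotmod_scaleE -?quotmod_addE.
Qed.

HB.instance Definition _ :=
  GRing.isSemilinear.Build R M quotmod *:%R quotmod_pi quotmod_pi_semilinear.

End QuotientSemimodule.

Section ChainRelation.
Variables (R : pzSemiRingType) (N M : lSemiModType R) (f g : {linear N -> M}).

Local Notation chain := (sim_chain f g).

Lemma sim_chain_refl m : chain m m.
Proof.
exists 1%N, (fun _ => m), (fun _ => 0), (fun _ => 0).
by split => //; rewrite !linear0 !addr0.
Qed.

Lemma sim_chain_sym m m' : chain m m' -> chain m' m.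
Proof.
case=> k [ms [ns [ns' [k_gt0 start link stop]]]].
exists k, (fun i => ms (k.-1 - i)%N), (fun i => ns' (k.-1 - i)%N),
  (fun i => ns (k.-1 - i)%N); split => //.
- by rewrite subn0 stop.
- move=> i ik; have -> : (k.-1 - i = (k.-1 - i.+1).+1)%N by lia.
  by rewrite link //; lia.
- by rewrite subnn.
Qed.

Lemma sim_chain_trans m1 m2 m3 : chain m1 m2 -> chain m2 m3 -> chain m1 m3.
Proof.
case=> k1 [ms1 [ns1 [ns1' [k1_gt0 start1 link1 stop1]]]].
case=> k2 [ms2 [ns2 [ns2' [k2_gt0 start2 link2 stop2]]]].
pose glue T (u v : nat -> T) i := if (i < k1)%N then u i else v (i - k1)%N.
exists (k1 + k2)%N, (glue _ ms1 ms2), (glue _ ns1 ns2), (glue _ ns1' ns2').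
rewrite /glue; split.
- lia.
- by rewrite k1_gt0.
- move=> i ik; case: (ltnP i.+1 k1) => [i1k1 | k1i1].
    by rewrite (ltn_trans (ltnSn i) i1k1) link1.
  case: (ltnP i k1) => [ik1 | k1i].
    have ->: i = k1.-1 by lia.
    have ->: (k1.-1.+1 - k1 = 0)%N by lia.
    by rewrite stop1 start2.
  have ->: (i.+1 - k1 = (i - k1).+1)%N by lia.
  by rewrite link2 //; lia.
- have ->: ((k1 + k2).-1 < k1)%N = false by lia.
  have ->: ((k1 + k2).-1 - k1 = k2.-1)%N by lia.
  exact: stop2.
Qed.

Lemma sim_chainDr m m' p : chain m m' -> chain (m + p) (m' + p).
Proof.
case=> k [ms [ns [ns' [k_gt0 start link stop]]]].
have shift (x y z : M) : x + p + y + z = x + y + z + p.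
  by rewrite (addrAC x p) (addrAC _ p).
exists k, (fun i => ms i + p), ns, ns'; split => //.
- by rewrite start shift.
- by move=> i ik; rewrite !shift link.
- by rewrite shift stop.
Qed.

Lemma sim_chainD m1 m1' m2 m2' :
  chain m1 m1' -> chain m2 m2' -> chain (m1 + m2) (m1' + m2').
Proof.
move=> chain1 chain2; apply: sim_chain_trans (sim_chainDr m2 chain1) _.
by rewrite !(addrC m1'); apply: sim_chainDr.
Qed.

Lemma sim_chainZ r m m' : chain m m' -> chain (r *: m) (r *: m').
Proof.
case=> k [ms [ns [ns' [k_gt0 start link stop]]]].
exists k, (fun i => r *: ms i), (fun i => r *: ns i), (fun i => r *: ns' i).
split => //.
- by rewrite start !scalerDr !linearZZ.
- by move=> i ik; rewrite !linearZZ -!scalerDr link.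
- by rewrite !linearZZ -!scalerDr stop.
Qed.

Lemma sim_chain_coeq n : chain (f n) (g n).
Proof.
exists 1%N, (fun _ => 0), (fun _ => n), (fun _ => 0).
by split => //; rewrite !linear0 addr0 add0r.
Qed.

(* Quotients in generic_quotient are taken by boolean relations, hence the
   classical reflection of the Prop-valued chain relation. *)
Lemma sim_chain_equiv_class : equiv_class_of (fun m m' => `[< chain m m' >]).
Proof.
split=> [m | m m' | m2 m1 m3]; first exact/asboolP/sim_chain_refl.
  by apply/asboolP/asboolP; apply: sim_chain_sym.
move=> /asboolP chain12 /asboolP chain23.
by apply/asboolP; exact: sim_chain_trans chain12 chain23.
Qed.

Definition sim_chain_congruence : semimod_congruence M.
Proof.
apply: (@SemimodCongruence _ _ (EquivRelPack sim_chain_equiv_class)) => /=.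
  by move=> x x' y y' /asboolP chainx /asboolP chainy; apply/asboolP/sim_chainD.
by move=> r x x' /asboolP chainx; apply/asboolP/sim_chainZ.
Defined.

Lemma coeq_swap (P : lSemiModType R) (h : {linear M -> P}) :
  (forall n, h (f n) = h (g n)) ->
  forall x n n', h (x + f n + g n') = h (x + f n' + g n).
Proof. by move=> hfg x n n'; rewrite !linearD !hfg addrAC. Qed.

Lemma sim_chain_hom m m' : chain m m' -> sim_hom f g m m'.
Proof.
case=> k [ms [ns [ns' [k_gt0 start link stop]]]] P h hfg.
have along i : (i < k)%N -> h m = h (ms i + f (ns i) + g (ns' i)).
  elim: i => [|i IH] ik; first by rewrite start.
  by rewrite -link // -(coeq_swap hfg) IH // ltnW.
by rewrite -stop -(coeq_swap hfg) (along k.-1) // prednK.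
Qed.

Lemma sim_hom_chain m m' : sim_hom f g m m' -> chain m m'.
Proof.
move=> hom_eq; pose c := sim_chain_congruence.
have /quotmod_eqP/asboolP // : quotmod_pi c m = quotmod_pi c m'.
by apply: hom_eq => n; apply/quotmod_eqP/asboolP/sim_chain_coeq.
Qed.

End ChainRelation.

Theorem theorem2p14 (R : pzSemiRingType) (N M : lSemiModType R)
    (f g : {linear N -> M}) :
  forall m m' : M, sim_hom f g m m' <-> sim_chain f g m m'.
Proof. by move=> m m'; split; [apply: sim_hom_chain | apply: sim_chain_hom]. Qed.
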